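(* Let $\mathbf v\in\mathbb R_{>0}^m$. If $(\mathcal V,\mathcal W)\in\mathcal{DRS}_{\mathbf v}$ is a local $d_P$-minimizer of the joint potential $\mathrm{FP}$ on $\mathcal{DRS}_{\mathbf v}$, then $\mathcal W=\mathcal V^\#$.
   Context: Fix integers $m,d\ge1$ and $\mathbf k=(k_1,\dots,k_m)\in\mathbb N^m$ with each $k_i\le d$. A system is an $m$-tuple $\mathcal V=(V_i)_{i=1}^m$ with $V_i\in L(\mathbb C^d,\mathbb C^{k_i})$. Its analysis operator is $T_{\mathcal V}x=(V_1x,\dots,V_mx)$ and its RS operator is $S_{\mathcal V}=T_{\mathcal V}^*T_{\mathcal V}=\sum_iV_i^*V_i$; $\mathcal V$ is a reconstruction system (RS) if $S_{\mathcal V}$ is invertible, and $\mathcal{RS}(m,\mathbf k,d)$ is the set of RS's. Given weights $\mathbf v\in\mathbb R_{>0}^m$, $\mathcal P_{\mathbf v}(m,\mathbf k,d)$ is the set of RS's with $V_iV_i^*=v_i^2I_{k_i}$ for all $i$. The canonical dual is $\mathcal V^\#=(V_iS_{\mathcal V}^{-1})_i$; $\mathcal W\in\mathcal{RS}$ is a dual of $\mathcal V$ if $\sum_iW_i^*V_i=I_d$, and $\mathcal D(\mathcal V)$ is the set of duals. $\mathcal{DRS}_{\mathbf v}=\{(\mathcal V,\mathcal W)\in\mathcal P_{\mathbf v}\times\mathcal{RS}(m,\mathbf k,d):\mathcal W\in\mathcal D(\mathcal V)\}$, with joint potential $\mathrm{FP}(\mathcal V,\mathcal W)=\operatorname{tr}S_{\mathcal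 V}^2+\operatorname{tr}S_{\mathcal W}^2$. The metric $d_P(\mathcal V,\mathcal W)=(\sum_i\|V_i-W_i\|_2^2)^{1/2}$ uses the Frobenius norm. A pair $(\mathcal V,\mathcal W)\in\mathcal{DRS}_{\mathbf v}$ is a local $d_P$-minimizer of FP if there is $\varepsilon>0$ such that $\mathrm{FP}(\mathcal V',\mathcal W')\ge\mathrm{FP}(\mathcal V,\mathcal W)$ for all $(\mathcal V',\mathcal W')\in\mathcal{DRS}_{\mathbf v}$ with $d_P(\mathcal V,\mathcal V')+d_P(\mathcal W,\mathcal W')<\varepsilon$. *)

(* Complex scalars: an arbitrary numClosedFieldType C
   (e.g. algC). *)
From HB Require Import structures.
From mathcomp Require Import all_boot all_order all_algebra.
Set Implicit Arguments. Unset Strict Implicit. Unset Printing Implicit Defensive.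
Import Order.TTheory GRing.Theory Num.Theory.
Local Open Scope ring_scope.

Section Systems.
Variables (C : numClosedFieldType) (m d : nat) (k : 'I_m -> nat).

Definition adjmx p q (A : 'M[C]_(p, q)) : 'M[C]_(q, p) := (map_mx Num.conj A)^T.

(* a system V = (V_i), V_i : C^d -> C^(k i) *)
Definition sys := forall i : 'I_m, 'M[C]_(k i, d).

Definition RSop (V : sys) : 'M[C]_d := \sum_(i < m) adjmx (V i) *m V i.

Definition isRS (V : sys) : Prop := RSop V \in unitmx.

Definition inP (v : 'I_m -> C) (V : sys) : Prop :=
  isRS V /\ forall i, V i *m adjmx (V i) = (v i ^+ 2)%:M.

Definition candual (V : sys) : sys := fun i => V i *m invmx (RSop V).

Definition isDual (V W : sys) : Prop :=
  isRS W /\ \sum_(i < m) adjmx (W i) *m V i = 1%:M.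

Definition inDRS (v : 'I_m -> C) (V W : sys) : Prop := inP v V /\ isDual V W.

Definition FP (V W : sys) : C :=
  \tr (RSop V *m RSop V) + \tr (RSop W *m RSop W).

Definition frob2 p q (A : 'M[C]_(p, q)) : C :=
  \sum_(a < p) \sum_(b < q) `|A a b| ^+ 2.

Definition dP (V W : sys) : C := sqrtC (\sum_(i < m) frob2 (V i - W i)).

Definition local_dP_min (v : 'I_m -> C) (V W : sys) : Prop :=
  exists2 eps : C, 0 < eps &
    forall V' W' : sys, inDRS v V' W' ->
      dP V V' + dP W W' < eps -> FP V W <= FP V' W'.

End Systems.

(* Write Z := W - V#.  Since W and V# are both duals of V, the Z_i satisfy
   sum_i Z_i^* V_i = 0, and therefore also sum_i Z_i^* V#_i = 0.  Along the
   line of duals V# + t Z the cross terms of the RS operator vanish, so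
   S_{V#+tZ} = S_{V#} + |t|^2 S_Z and FP(V, V# + t Z) is a polynomial in |t|^2
   with nonnegative coefficients whose top coefficient is tr S_Z^2.  The pair
   (V, W) sits at t = 1, and every t slightly below 1 stays in the
   d_P-neighbourhood, so local minimality forces tr S_Z^2 = 0, i.e. Z = 0.
   Neither the weights v nor the bounds on m, d, k_i enter the argument. *)
From Stdlib Require Import FunctionalExtensionality.
From HB Require Import structures.
From mathcomp Require Import all_boot all_order all_algebra.
Import Order.TTheory GRing.Theory Num.Theory.
Local Open Scope ring_scope.
Set Implicit Arguments. Unset Strict Implicit.

Section Adjoint.
Variable C : numClosedFieldType.

Lemma adjmxM p q r (A : 'M[C]_(p, q)) (B : 'M[C]_(q, r)) :
  adjmx (A *m B) = adjmx B *m adjmx A.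
Proof. by rewrite /adjmx map_mxM trmx_mul. Qed.

Lemma adjmxK p q (A : 'M[C]_(p, q)) : adjmx (adjmx A) = A.
Proof. by apply/matrixP => i j; rewrite !mxE conjCK. Qed.

Lemma adjmxD p q (A B : 'M[C]_(p, q)) : adjmx (A + B) = adjmx A + adjmx B.
Proof. by apply/matrixP => i j; rewrite !mxE rmorphD. Qed.

Lemma adjmxB p q (A B : 'M[C]_(p, q)) : adjmx (A - B) = adjmx A - adjmx B.
Proof. by apply/matrixP => i j; rewrite !mxE rmorphB. Qed.

Lemma adjmxZ p q c (A : 'M[C]_(p, q)) : adjmx (c *: A) = c^* *: adjmx A.
Proof. by apply/matrixP => i j; rewrite !mxE rmorphM. Qed.

Lemma adjmx0 p q : adjmx (0 : 'M[C]_(p, q)) = 0.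
Proof. by apply/matrixP => i j; rewrite !mxE rmorph0. Qed.

Lemma adjmx1 p : adjmx (1%:M : 'M[C]_p) = 1%:M.
Proof. by apply/matrixP => i j; rewrite !mxE eq_sym rmorph_nat. Qed.

Lemma adjmx_sum p q (I : finType) (F : I -> 'M[C]_(p, q)) :
  adjmx (\sum_i F i) = \sum_i adjmx (F i).
Proof.
apply/matrixP => a b; rewrite !mxE !summxE rmorph_sum.
by apply: eq_bigr => i _; rewrite !mxE.
Qed.

Lemma mxtrace_mul_adjmx p q (A : 'M[C]_(p, q)) : \tr (A *m adjmx A) = frob2 A.
Proof.
apply: eq_bigr => a _; rewrite mxE.
by apply: eq_bigr => b _; rewrite !mxE normCK.
Qed.

Lemma frob2_ge0 p q (A : 'M[C]_(p, q)) : 0 <= frob2 A.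
Proof. by do 2![apply: sumr_ge0 => ? _]; rewrite exprn_ge0. Qed.

Lemma frob2_eq0 p q (A : 'M[C]_(p, q)) : frob2 A = 0 -> A = 0.
Proof.
have entry_ge0 a b : 0 <= `|A a b| ^+ 2 by rewrite exprn_ge0.
move=> A0; apply/matrixP => a b; rewrite mxE.
have row0 := psumr_eq0P (fun a _ => sumr_ge0 _ (fun b _ => entry_ge0 a b)) A0.
have /(_ b isT)/eqP := psumr_eq0P (fun b _ => entry_ge0 a b) (row0 a isT).
by rewrite expf_eq0 normr_eq0 => /eqP.
Qed.

Lemma frob20 p q : frob2 (0 : 'M[C]_(p, q)) = 0.
Proof. by do 2![apply: big1 => ? _]; rewrite mxE normr0 expr0n. Qed.

Lemma frob2Z p q c (A : 'M[C]_(p, q)) : frob2 (c *: A) = `|c| ^+ 2 * frob2 A.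
Proof.
rewrite /frob2 mulr_sumr; apply: eq_bigr => a _; rewrite mulr_sumr.
by apply: eq_bigr => b _; rewrite mxE normrM exprMn.
Qed.

Lemma psum_frob2_eq0 (I : finType) (p q : I -> nat) (F : forall i, 'M[C]_(p i, q i)) :
  \sum_i frob2 (F i) = 0 -> forall i, F i = 0.
Proof.
move=> F0 i; apply/frob2_eq0; move: i isT.
by apply: psumr_eq0P F0 => i _; apply: frob2_ge0.
Qed.

End Adjoint.

Lemma le_contraction_eq0 (R : numDomainType) (a b c : R) :
  0 <= a -> 0 <= b -> 0 <= c -> c < 1 -> a + b <= c * a + c ^+ 2 * b -> b = 0.
Proof.
move=> a_ge0 b_ge0 c_ge0 c_lt1 le_ab.
have c2_lt1 : c ^+ 2 < 1 by rewrite expr2 mulr_ilt1.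
have b_le : b <= c ^+ 2 * b.
  rewrite -(lerD2l a); apply: le_trans le_ab _.
  by rewrite lerD2r ler_piMl // ltW.
apply/eqP; rewrite eq_le b_ge0 andbT.
by rewrite -(pmulr_rle0 _ (_ : 0 < 1 - c ^+ 2)) ?subr_gt0 // mulrBl mul1r subr_le0.
Qed.

Lemma exists_shrink_within (R : numFieldType) (r eps : R) : 0 <= r -> 0 < eps ->
  exists2 t : R, 0 < t < 1 & (1 - t) * r < eps.
Proof.
move=> r_ge0 eps_gt0.
have den_gt0 : 0 < r + eps + 1 by rewrite -addrA ltr_wpDl // addr_gt0.
exists (1 - eps / (r + eps + 1)); last first.
  by rewrite opprB addrC subrK mulrAC ltr_pdivrMr // ltr_pM2l // -addrA ltrDl addr_gt0.
rewrite subr_gt0 gtrBl divr_gt0 //= andbT ltr_pdivrMr // mul1r.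
by rewrite -addrA ltr_wpDl // ltrDl.
Qed.

Section Systems.
Variables (C : numClosedFieldType) (m d : nat) (k : 'I_m -> nat).
Local Notation sys := (sys C d k).

Lemma RSop_adjmx (V : sys) : adjmx (RSop V) = RSop V.
Proof. by rewrite adjmx_sum; apply: eq_bigr => i _; rewrite adjmxM adjmxK. Qed.

Lemma mxtrace_RSopM (X Y : sys) :
  \tr (RSop X *m RSop Y) = \sum_i \sum_j frob2 (Y j *m adjmx (X i)).
Proof.
rewrite /RSop mulmx_suml raddf_sum; apply: eq_bigr => i _.
rewrite mulmx_sumr raddf_sum; apply: eq_bigr => j _.
rewrite -mxtrace_mul_adjmx adjmxM adjmxK [LHS]mxtrace_mulC !mulmxA.
by rewrite -!mulmxA [LHS]mxtrace_mulC !mulmxA.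
Qed.

Lemma mxtrace_RSopM_ge0 (X Y : sys) : 0 <= \tr (RSop X *m RSop Y).
Proof. by rewrite mxtrace_RSopM; do 2![apply: sumr_ge0 => ? _]; apply: frob2_ge0. Qed.

Lemma mxtrace_RSop2_eq0 (X : sys) : \tr (RSop X *m RSop X) = 0 -> forall i, X i = 0.
Proof.
rewrite mxtrace_RSopM => X0 i.
have /(_ i isT)/psum_frob2_eq0/(_ i) :=
  psumr_eq0P (fun i _ => sumr_ge0 _ (fun j _ => frob2_ge0 _)) X0.
by move/(congr1 mxtrace); rewrite mxtrace_mul_adjmx mxtrace0 => /frob2_eq0.
Qed.

(* u S_X u^* = sum_i |u X_i^*|^2, so u S_X = 0 forces u X_i^* = 0 for all i,
   and then u = u sum_i X_i^* Y_i = 0. *)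
Lemma dual_isRS (X Y : sys) : \sum_i adjmx (X i) *m Y i = 1%:M -> isRS X.
Proof.
move=> XY1; rewrite /isRS unitmxE unitfE; apply/det0P => -[u u_neq0 uS0].
have uX0 : forall i, u *m adjmx (X i) = 0.
  have : \tr (u *m RSop X *m adjmx u) = 0 by rewrite uS0 mul0mx mxtrace0.
  rewrite mulmx_sumr mulmx_suml raddf_sum => tr0.
  apply: (psum_frob2_eq0 (p := fun _ => 1%N)); rewrite -[RHS]tr0.
  by apply: eq_bigr => i _; rewrite -mxtrace_mul_adjmx adjmxM adjmxK !mulmxA.
move/eqP: u_neq0; apply; rewrite -(mulmx1 u) -XY1 mulmx_sumr.
by apply: big1 => i _; rewrite mulmxA uX0 mul0mx.
Qed.

Lemma candual_dual (V : sys) : isRS V -> \sum_i adjmx (candual V i) *m V i = 1%:M.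
Proof.
move=> RSV; rewrite -adjmx1 -(mulmxV RSV) adjmxM RSop_adjmx mulmx_sumr.
by apply: eq_bigr => i _; rewrite adjmxM mulmxA.
Qed.

Lemma dP_refl (V : sys) : dP V V = 0.
Proof. by rewrite /dP big1 ?sqrtC0 // => i _; rewrite subrr frob20. Qed.

Section DualLine.
Variables (V Z : sys).
Hypothesis Z_orth : \sum_i adjmx (Z i) *m V i = 0.

Definition dual_line (t : C) : sys := fun i => candual V i + t *: Z i.

Lemma candual_orthl : \sum_i adjmx (candual V i) *m Z i = 0.
Proof.
transitivity (adjmx (invmx (RSop V)) *m adjmx (\sum_i adjmx (Z i) *m V i)).
  rewrite adjmx_sum mulmx_sumr.
  by apply: eq_bigr => i _; rewrite !adjmxM adjmxK mulmxA.
by rewrite Z_orth adjmx0 mulmx0.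
Qed.

Lemma candual_orthr : \sum_i adjmx (Z i) *m candual V i = 0.
Proof.
transitivity ((\sum_i adjmx (Z i) *m V i) *m invmx (RSop V)).
  by rewrite mulmx_suml; apply: eq_bigr => i _; rewrite mulmxA.
by rewrite Z_orth mul0mx.
Qed.

Lemma dual_line_dual t : isRS V -> \sum_i adjmx (dual_line t i) *m V i = 1%:M.
Proof.
move=> RSV.
transitivity (\sum_i adjmx (candual V i) *m V i + t^* *: \sum_i adjmx (Z i) *m V i).
  rewrite scaler_sumr -big_split; apply: eq_bigr => i _ /=.
  by rewrite adjmxD adjmxZ mulmxDl scalemxAl.
by rewrite candual_dual // Z_orth scaler0 addr0.
Qed.

Lemma RSop_dual_line t :
  RSop (dual_line t) = RSop (candual V) + `|t| ^+ 2 *: RSop Z.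
Proof.
transitivity (RSop (candual V) + t *: \sum_i adjmx (candual V i) *m Z i
  + t^* *: \sum_i adjmx (Z i) *m candual V i + (t^* * t) *: RSop Z).
  rewrite /RSop !scaler_sumr -!big_split; apply: eq_bigr => i _ /=.
  by rewrite adjmxD adjmxZ mulmxDl !mulmxDr -!scalemxAl -!scalemxAr scalerA addrA.
by rewrite candual_orthl candual_orthr !scaler0 !addr0 normCK mulrC.
Qed.

Lemma FP_dual_line t :
  FP V (dual_line t) = \tr (RSop V *m RSop V) + \tr (RSop (candual V) *m RSop (candual V))
    + (`|t| ^+ 2 * (\tr (RSop (candual V) *m RSop Z) *+ 2)
       + (`|t| ^+ 2) ^+ 2 * \tr (RSop Z *m RSop Z)).
Proof.
rewrite /FP RSop_dual_line mulmxDl !mulmxDr -!scalemxAl -!scalemxAr scalerA.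
rewrite !mxtraceD !mxtraceZ [\tr (RSop Z *m _)]mxtrace_mulC.
by rewrite expr2 mulr2n mulrDr !addrA.
Qed.

Lemma dP_dual_line t1 t2 :
  dP (dual_line t1) (dual_line t2) = `|t1 - t2| * sqrtC (\sum_i frob2 (Z i)).
Proof.
rewrite /dP (eq_bigr (fun i => `|t1 - t2| ^+ 2 * frob2 (Z i))); last first.
  by move=> i _; rewrite opprD addrACA subrr add0r -scalerBl frob2Z.
rewrite -mulr_sumr sqrtCM ?sqrCK ?nnegrE ?exprn_ge0 //.
by apply: sumr_ge0 => i _; apply: frob2_ge0.
Qed.

End DualLine.
End Systems.

Theorem lemma6p2 (C : numClosedFieldType) (m d : nat) (k : 'I_m -> nat)
  (hm : (0 < m)%N) (hd : (0 < d)%N)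
  (hk : forall i, (0 < k i)%N /\ (k i <= d)%N)
  (v : 'I_m -> C) (hv : forall i, 0 < v i)
  (V W : sys C d k) :
  inDRS v V W -> local_dP_min v V W ->
  W = candual V.
Proof.
move=> [PV [_ dualW]] [eps eps_gt0 minVW].
have RSV : isRS V by case: PV.
pose Z : sys C d k := fun i => W i - candual V i.
have W_line : W = dual_line V Z 1.
  by apply: functional_extensionality_dep => i; rewrite /dual_line scale1r addrC subrK.
have Z_orth : \sum_i adjmx (Z i) *m V i = 0.
  transitivity (\sum_i adjmx (W i) *m V i - \sum_i adjmx (candual V i) *m V i).
    by rewrite -sumrB; apply: eq_bigr => i _; rewrite adjmxB mulmxBl.
  by rewrite dualW candual_dual // subrr.
have normZ_ge0 : 0 <= sqrtC (\sum_i frob2 (Z i)).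
  by rewrite sqrtC_ge0 sumr_ge0 // => i _; apply: frob2_ge0.
have [t /andP[t_gt0 t_lt1] t_near] := exists_shrink_within normZ_ge0 eps_gt0.
have le_FP : FP V (dual_line V Z 1) <= FP V (dual_line V Z t).
  rewrite -W_line; apply: minVW.
    by split=> //; split; [apply: dual_isRS |]; apply: dual_line_dual.
  by rewrite dP_refl add0r W_line dP_dual_line gtr0_norm ?subr_gt0.
rewrite !(FP_dual_line Z_orth) lerD2l normr1 !expr1n !mul1r in le_FP.
have t2_lt1 : `|t| ^+ 2 < 1 by rewrite gtr0_norm // expr2 mulr_ilt1 // ltW.
have /mxtrace_RSop2_eq0 Z0 := le_contraction_eq0 (mulrn_wge0 _ (mxtrace_RSopM_ge0 _ _))
  (mxtrace_RSopM_ge0 _ _) (exprn_ge0 _ (normr_ge0 t)) t2_lt1 le_FP.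
by apply: functional_extensionality_dep => i; apply/eqP; rewrite -subr_eq0; apply/eqP/Z0.
Qed.
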